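(* For every instance of a combinatorial optimization problem (constrained or unconstrained), with $m$ the number of distinct cost values over the feasible solutions, the dynamical Lie algebra of QWOA satisfies $$\dim(\mathfrak g_{\mathrm{QWOA}})\le m^2+1 .$$
   Context: An instance of a combinatorial optimization problem consists of a finite nonempty set $\mathcal S'$ of feasible solutions and a cost function $C:\mathcal S'\to\mathbb R$ (for an unconstrained problem, $\mathcal S'$ is the whole solution space). Let $N=|\mathcal S'|$ and let $m=|C(\mathcal S')|$ be the number of distinct cost values over the feasible solutions. Work in $\mathbb C^N$ with orthonormal basis $\{|z\rangle : z\in\mathcal S'\}$ (for constrained problems this is the indexed feasible subspace, obtained from the full space by a fixed change of basis). The problem Hamiltonian is the diagonal matrix $H_C$ with $H_C|z\rangle=C(z)|z\rangle$. The mixing Hamiltonian is the $N\times N$ all-ones matrix $H_M=J$; it differs from the adjacency matrix of the complete graph $K_N$ by the identity matrix, so it generates the same QWOA mixing unitaries $e^{-itH_M}$ up to a global phase. The dynamical Lie algebra (DLA) of QWOA, $\mathfrak g_{\mathrm{QWOA}}$, is the real Lie algebra generated by $iH_C$ and $iH_M$, i.e. the smallest real linear subspace of the $N\times N$ complex matrices that contains $iH_C$ and $iH_M$ and is closed under the commutator $[A,B]=AB-BA$; its dimension is its dimension as a real vector space. *)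

From HB Require Import structures.
From mathcomp Require Import all_boot all_order all_algebra.
From mathcomp Require Import complex.
Set Implicit Arguments. Unset Strict Implicit. Unset Printing Implicit Defensive.
Import Order.TTheory GRing.Theory Num.Theory.
Local Open Scope ring_scope.

Section QWOA.
Variable R : rcfType.

Definition rC (r : R) : R[i] := Complex r 0.
Definition iC : R[i] := Complex 0 1.

Definition num_costs (T : finType) (C : T -> R) : nat :=
  size (undup [seq C x | x <- enum T]).

(* problem Hamiltonian H_C : diagonal, basis |z> indexed by enum T *)
Definition H_C (T : finType) (C : T -> R) : 'M[R[i]]_#|T| :=
  \matrix_(i, j) (if i == j then rC (C (enum_val i)) else 0).

Definition H_M (n : nat) : 'M[R[i]]_n := const_mx 1.

Definition lie_bracket (n : nat) (A B : 'M[R[i]]_n) : 'M[R[i]]_n :=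
  A *m B - B *m A.

Definition real_lie_closed (n : nat) (S : 'M[R[i]]_n -> Prop) : Prop :=
  [/\ S 0,
      (forall A B, S A -> S B -> S (A + B)),
      (forall (r : R) A, S A -> S (rC r *: A)) &
      (forall A B, S A -> S B -> S (lie_bracket A B))].

Definition gen_real_lie (n : nat) (X Y : 'M[R[i]]_n) (A : 'M[R[i]]_n) : Prop :=
  forall S : 'M[R[i]]_n -> Prop, real_lie_closed S -> S X -> S Y -> S A.

Definition dla_QWOA (T : finType) (C : T -> R) : 'M[R[i]]_#|T| -> Prop :=
  gen_real_lie (iC *: H_C C) (iC *: H_M #|T|).

Definition real_lin_indep (n : nat) (s : seq 'M[R[i]]_n) : Prop :=
  forall c : 'I_(size s) -> R,
    \sum_(k < size s) rC (c k) *: s`_k = 0 -> forall k, c k = 0.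

(* real dimension of S is at most d: every real-linearly independent
   finite family in S has at most d elements *)
Definition real_dim_le (n : nat) (S : 'M[R[i]]_n -> Prop) (d : nat) : Prop :=
  forall s : seq 'M[R[i]]_n,
    (forall A, A \in s -> S A) -> real_lin_indep s -> (size s <= d)%N.

End QWOA.

From HB Require Import structures.
From mathcomp Require Import all_boot all_order all_algebra.
From mathcomp Require Import complex.
From mathcomp Require Import ring.
Set Implicit Arguments. Unset Strict Implicit. Unset Printing Implicit Defensive.
Import Order.TTheory GRing.Theory Num.Theory.
Local Open Scope ring_scope.

(* Both generators i H_C and i J lie in two real Lie algebras: the
   skew-Hermitian matrices, and the span of H_C together with the matrices
   whose (z, z') entry depends only on the costs C z and C z' (products of
   such matrices sum over a common middle index, so they keep this form).
   The latter has complex dimension at most m^2 + 1: besides H_C it is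
   spanned by the m^2 indicator matrices of pairs of cost values.  Finally,
   real-independent skew-Hermitian matrices are complex-independent, since
   X + i Y determines X and Y. *)

Lemma real_lie_closedI (R : rcfType) n (S1 S2 : 'M[R[i]]_n -> Prop) :
  real_lie_closed S1 -> real_lie_closed S2 ->
  real_lie_closed (fun A => S1 A /\ S2 A).
Proof.
move=> [S1_0 S1D S1Z S1L] [S2_0 S2D S2Z S2L]; split=> //.
- by move=> A B [? ?] [? ?]; split; [apply: S1D | apply: S2D].
- by move=> r A [? ?]; split; [apply: S1Z | apply: S2Z].
- by move=> A B [? ?] [? ?]; split; [apply: S1L | apply: S2L].
Qed.

Lemma conjc_rC (R : rcfType) (x : R) : conjc (rC x) = rC x.
Proof. exact: conjc_real. Qed.

Lemma conjcD (R : rcfType) (x y : R[i]) : conjc (x + y) = conjc x + conjc y.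
Proof. exact: rmorphD. Qed.

Lemma conjcN (R : rcfType) (x : R[i]) : conjc (- x) = - conjc x.
Proof. exact: rmorphN. Qed.

Lemma conjcM (R : rcfType) (x y : R[i]) : conjc (x * y) = conjc x * conjc y.
Proof. exact: rmorphM. Qed.

Lemma conjc_iC (R : rcfType) : conjc (iC R) = - iC R.
Proof. by apply/eqP; rewrite eq_complex /= oppr0 !eqxx. Qed.

Lemma complex_rC_iC (R : rcfType) (x : R[i]) :
  x = rC (complex.Re x) + iC R * rC (complex.Im x).
Proof. exact: complexE. Qed.

Lemma size_free_le_span (K : fieldType) (vT : vectType K) (s L : seq vT) :
  free s -> {subset s <= <<L>>%VS} -> (size s <= size L)%N.
Proof.
move=> /eqnP <- /span_subvP sLs.
exact: leq_trans (dimvS sLs) (dim_span L).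
Qed.

Section SkewHermitian.
Variables (R : rcfType) (n : nat).
Implicit Types (A B X Y : 'M[R[i]]_n).

Definition skew_hermitian A := forall i j, A j i = - conjc (A i j).

Lemma skew_hermitian_lie_closed : real_lie_closed skew_hermitian.
Proof.
split.
- by move=> i j; rewrite !mxE conjc0 oppr0.
- by move=> A B hA hB i j; rewrite !mxE hA hB conjcD opprD.
- by move=> r A hA i j; rewrite !mxE hA conjcM conjc_rC mulrN.
- move=> A B hA hB i j.
  have conj_prod C D : skew_hermitian C -> skew_hermitian D ->
      \sum_k C j k * D k i = conjc (\sum_k D i k * C k j).
    move=> hC hD; rewrite rmorph_sum; apply: eq_bigr => k _.
    by rewrite hC hD mulrNN rmorphM mulrC.
  by rewrite !mxE conj_prod // [\sum_k B j k * _]conj_prod // rmorphB opprB.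
Qed.

Lemma skew_hermitian_sum (s : seq 'M[R[i]]_n) (c : 'I_(size s) -> R) :
  (forall A, A \in s -> skew_hermitian A) ->
  skew_hermitian (\sum_k rC (c k) *: s`_k).
Proof.
move=> hs; have [h0 hD hZ _] := skew_hermitian_lie_closed.
by apply: (big_ind skew_hermitian) => // k _; apply/hZ/hs/mem_nth.
Qed.

Lemma skew_hermitian_re_im_eq0 X Y :
  skew_hermitian X -> skew_hermitian Y -> X + iC R *: Y = 0 -> X = 0 /\ Y = 0.
Proof.
move=> hX hY hXY.
have eq0 i j : X i j + iC R * Y i j = 0.
  by have /matrixP/(_ i j) := hXY; rewrite !mxE.
have conj_eq0 i j : - X i j + iC R * Y i j = 0.
  have := congr1 conjc (eq0 j i).
  by rewrite hX hY conjcD conjcM !conjcN !conjcK conjc_iC mulrNN conjc0.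
have X0 i j : X i j = 0.
  have : X i j + iC R * Y i j - (- X i j + iC R * Y i j) = X i j *+ 2.
    by rewrite mulr2n; ring.
  by rewrite eq0 conj_eq0 subrr => /esym/eqP; rewrite mulrn_eq0 => /eqP.
have iCY0 i j : iC R * Y i j = 0 by rewrite -(eq0 i j) X0 add0r.
split; apply/matrixP => i j; rewrite mxE ?X0 //.
have /eqP := iCY0 i j; rewrite mulf_eq0 => /orP [|/eqP //].
by rewrite eq_complex /= oner_eq0 andbF.
Qed.

Lemma skew_hermitian_real_lin_indep_free (s : seq 'M[R[i]]_n) :
  (forall A, A \in s -> skew_hermitian A) -> real_lin_indep s -> free s.
Proof.
move=> hs hind; apply/(@freeP _ _ _ (in_tuple s)) => u hu k.
set X := \sum_k rC (complex.Re (u k)) *: s`_k.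
set Y := \sum_k rC (complex.Im (u k)) *: s`_k.
have hXY : X + iC R *: Y = 0.
  rewrite -hu scaler_sumr -big_split; apply: eq_bigr => l _.
  by rewrite scalerA [u l in RHS]complex_rC_iC scalerDl.
have [X0 Y0] := skew_hermitian_re_im_eq0 (skew_hermitian_sum _ hs)
  (skew_hermitian_sum _ hs) hXY.
by rewrite (complex_rC_iC (u k)) (hind _ X0 k) (hind _ Y0 k) mulr0 addr0.
Qed.

End SkewHermitian.

Section CostMatrices.
Variables (R : rcfType) (n : nat) (f : 'I_n -> R).

Definition cost_mx (z : R -> R -> R[i]) : 'M[R[i]]_n :=
  \matrix_(i, j) z (f i) (f j).

Definition cost_diag : 'M[R[i]]_n := diag_mx (\row_i rC (f i)).

Definition cost_span (A : 'M[R[i]]_n) : Prop :=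
  exists a z, A = a *: cost_diag + cost_mx z.

Lemma mul_cost_diag_mx z :
  cost_diag *m cost_mx z = cost_mx (fun x y => rC x * z x y).
Proof. by rewrite mul_diag_mx; apply/matrixP => i j; rewrite !mxE. Qed.

Lemma mul_cost_mx_diag z :
  cost_mx z *m cost_diag = cost_mx (fun x y => z x y * rC y).
Proof. by rewrite mul_mx_diag; apply/matrixP => i j; rewrite !mxE. Qed.

Lemma mul_cost_mx z z' :
  cost_mx z *m cost_mx z' = cost_mx (fun x y => \sum_k z x (f k) * z' (f k) y).
Proof.
by apply/matrixP => i j; rewrite !mxE; apply: eq_bigr => k _; rewrite !mxE.
Qed.

Lemma cost_span_lie_closed : real_lie_closed cost_span.
Proof.
split.
- exists 0, (fun _ _ => 0); apply/matrixP => i j; rewrite !mxE; ring.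
- move=> A B [a [z ->]] [b [z' ->]]; exists (a + b), (fun x y => z x y + z' x y).
  by apply/matrixP => i j; rewrite !mxE; ring.
- move=> r A [a [z ->]]; exists (rC r * a), (fun x y => rC r * z x y).
  by apply/matrixP => i j; rewrite !mxE; ring.
- move=> A B [a [z ->]] [b [z' ->]]; exists 0.
  exists (fun x y => a * (rC x * z' x y - z' x y * rC y)
     + b * (z x y * rC y - rC x * z x y)
     + \sum_k (z x (f k) * z' (f k) y - z' x (f k) * z (f k) y)).
  rewrite /lie_bracket !mulmxDl !mulmxDr -!scalemxAl -!scalemxAr.
  rewrite !mul_cost_diag_mx !mul_cost_mx_diag !mul_cost_mx !scalerA mulrC.
  by apply/matrixP => i j; rewrite !mxE sumrB; ring.
Qed.

Variable vs : seq R.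
Hypothesis vs_uniq : uniq vs.
Hypothesis f_vs : forall i, f i \in vs.

Definition cost_unit_mx (v w : R) : 'M[R[i]]_n :=
  cost_mx (fun x y => ((x == v) && (y == w))%:R).

Lemma cost_mx_decomp z :
  cost_mx z = \sum_(v <- vs) \sum_(w <- vs) z v w *: cost_unit_mx v w.
Proof.
apply/matrixP => i j; rewrite summxE (bigD1_seq (f i)) //=.
rewrite [X in _ + X]big1 ?addr0; last first.
  move=> v vi; rewrite summxE big1 // => w _.
  by rewrite !mxE eq_sym (negbTE vi) mulr0.
rewrite summxE (bigD1_seq (f j)) //= [X in _ + X]big1 ?addr0.
  by rewrite !mxE !eqxx mulr1.
by move=> w wj; rewrite !mxE eqxx eq_sym (negbTE wj) mulr0.
Qed.

Lemma cost_span_sub_span A :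
  cost_span A ->
  A \in <<cost_diag :: [seq cost_unit_mx v w | v <- vs, w <- vs]>>%VS.
Proof.
move=> [a [z ->]]; rewrite cost_mx_decomp.
apply: rpredD; first by apply: rpredZ; apply: memv_span; apply: mem_head.
rewrite big_seq; apply: rpred_sum => v vvs.
rewrite big_seq; apply: rpred_sum => w wvs.
apply: rpredZ; apply: memv_span; rewrite inE; apply/orP; right.
exact: allpairs_f.
Qed.

End CostMatrices.

Section QWOA.
Variables (R : rcfType) (T : finType) (C : T -> R).

Definition enum_cost (i : 'I_#|T|) : R := C (enum_val i).

Lemma H_C_cost_diag : H_C C = cost_diag enum_cost.
Proof.
apply/matrixP => i j; rewrite !mxE.
by case: eqP => [->|_]; rewrite ?mulr1n ?mulr0n.
Qed.

Lemma H_M_cost_mx : H_M R #|T| = cost_mx enum_cost (fun _ _ => 1).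
Proof. by apply/matrixP => i j; rewrite !mxE. Qed.

Lemma dla_QWOA_sub A :
  dla_QWOA C A -> skew_hermitian A /\ cost_span enum_cost A.
Proof.
move/(_ (fun A => skew_hermitian A /\ cost_span enum_cost A)); apply.
  exact: real_lie_closedI (skew_hermitian_lie_closed R #|T|)
                          (cost_span_lie_closed enum_cost).
- split.
  + move=> i j; rewrite !mxE; case: (eqVneq i j) => [->|ne].
      by rewrite conjcM conjc_rC conjc_iC mulNr opprK.
    by rewrite mulr0 conjc0 oppr0.
  + exists (iC R), (fun _ _ => 0).
    by rewrite H_C_cost_diag; apply/matrixP => i j; rewrite !mxE addr0.
- split.
  + by move=> i j; rewrite !mxE mulr1 conjc_iC opprK.
  + exists 0, (fun _ _ => iC R).
    rewrite H_M_cost_mx; apply/matrixP => i j.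
    by rewrite !mxE mul0r mulr1 add0r.
Qed.

End QWOA.

Theorem theorem1 (R : rcfType) (T : finType) (hT : (0 < #|T|)%N) (C : T -> R) :
  real_dim_le (dla_QWOA C) ((num_costs C) ^ 2).+1.
Proof.
move=> s s_dla s_indep.
pose vs := undup [seq C x | x <- enum T].
have cost_vs i : enum_cost C i \in vs.
  by rewrite mem_undup; apply: map_f; rewrite mem_enum.
have s_skew A : A \in s -> skew_hermitian A by move/s_dla/dla_QWOA_sub => [].
have s_span A : A \in s -> A \in <<cost_diag (enum_cost C)
    :: [seq cost_unit_mx (enum_cost C) v w | v <- vs, w <- vs]>>%VS.
  move/s_dla/dla_QWOA_sub => [_].
  exact: (cost_span_sub_span (undup_uniq _) cost_vs).
have s_free := skew_hermitian_real_lin_indep_free s_skew s_indep.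
have := size_free_le_span s_free s_span.
by rewrite /= size_allpairs mulnn.
Qed.
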